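(* Let $(X,f)$ be a dynamical system and let $q_0:X\to Y_0$ and $q_1:X\to Y_1$ be quotient maps (continuous surjections onto compact Hausdorff spaces) such that $\ker(q_0)\sqsubseteq\ker(q_1)$. Then $\tilde h(X,f,q_0)\geq\tilde h(X,f,q_1)$.
   Context: A dynamical system is a pair $(X,f)$ with $X$ compact Hausdorff and $f:X\to X$ a continuous surjection. $\ker(q)$ denotes the equivalence relation (partition into fibers) induced by $q$ on $X$, and $\ker(q_0)\sqsubseteq\ker(q_1)$ means the partition of $q_0$ refines that of $q_1$ (every fiber of $q_0$ lies in a fiber of $q_1$). The quotient-topological entropy is $\tilde h(X,f,q)=\sup\{\mathrm{GR}_n(\#\bigvee_{i=0}^n f^{-i}(q^{-1}\mathcal U)):\mathcal U\text{ open cover of the target of } q\}$, where $\mathrm{GR}_t(x_t)=\limsup_{t\to\infty}\frac1t\ln x_t$, $\#\mathcal C$ is the minimal cardinality of a finite subcover of $\mathcal C$, and $\mathcal A\vee\mathcal B=\{A\cap B\}_{A\in\mathcal A,B\in\mathcal B}$. *)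

From HB Require Import structures.
From mathcomp Require Import all_boot all_order all_algebra.
From mathcomp Require Import all_classical all_reals all_analysis.
Set Implicit Arguments. Unset Strict Implicit. Unset Printing Implicit Defensive.
Import Order.TTheory GRing.Theory Num.Theory.
Local Open Scope classical_set_scope.
Local Open Scope ring_scope.

Definition compact_hausdorff (T : topologicalType) : Prop :=
  compact [set: T] /\ hausdorff_space T.

Definition quotient_map (X Y : topologicalType) (q : X -> Y) : Prop :=
  continuous q /\ (forall y, exists x, q x = y).

Definition ker_refines (X Y0 Y1 : Type) (q0 : X -> Y0) (q1 : X -> Y1) : Prop :=
  forall x y : X, q0 x = q0 y -> q1 x = q1 y.

Definition open_cover (Y : topologicalType) (U : set (set Y)) : Prop :=
  (forall V, U V -> open V) /\ [set: Y] `<=` \bigcup_(V in U) V.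

Definition preim_fam (X Y : Type) (g : X -> Y) (U : set (set Y)) : set (set X) :=
  [set g @^-1` V | V in U].

Definition join_fam (X : Type) (A B : set (set X)) : set (set X) :=
  [set a `&` b | a in A & b in B].

Fixpoint iter_join (X : Type) (f : X -> X) (C : set (set X)) (n : nat) : set (set X) :=
  match n with
  | 0 => C
  | n'.+1 => join_fam (iter_join f C n') (preim_fam (iter n f) C)
  end.

Definition subcover_sizes (X : Type) (C : set (set X)) : set nat :=
  [set n | exists g : nat -> set X,
      (forall i, (i < n)%N -> C (g i)) /\
      [set: X] `<=` \bigcup_(i in [set i | (i < n)%N]) g i].

(* #C : minimal cardinality of a finite subcover (0 if none exists) *)
Definition mincard (X : Type) (C : set (set X)) : nat :=
  match pselect (exists n, subcover_sizes C n) with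
  | left h => ex_minn (P := fun n => `[< subcover_sizes C n >]%type)
                (let: ex_intro n hn := h in ex_intro _ n (asboolT hn))
  | right _ => 0%N
  end.

Definition growth_rate (R : realType) (x : nat -> nat) : \bar R :=
  limn_esup (fun n => ((ln (x n)%:R) / n%:R)%:E).

Definition qtop_entropy (R : realType) (X Y : topologicalType)
    (f : X -> X) (q : X -> Y) : \bar R :=
  ereal_sup [set growth_rate R (fun n => mincard (iter_join f (preim_fam q U) n))
            | U in open_cover (Y:=Y)].

From HB Require Import structures.
From mathcomp Require Import all_boot all_order all_algebra.
From mathcomp Require Import all_classical all_reals all_analysis.
Set Implicit Arguments. Unset Strict Implicit. Unset Printing Implicit Defensive.
Local Open Scope classical_set_scope.
Local Open Scope ring_scope.
Local Open Scope ereal_scope.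

(* Every open cover U of Y1 can be transported to an open cover of Y0 with the
   same pullback to X: replace u by the set of points of Y0 whose whole
   q0-fiber lies in q1^-1 u.  This set is open because q0, a continuous map
   from a compact space to a Hausdorff space, is closed, and its q0-preimage
   is q1^-1 u because q1 is constant on q0-fibers.  Hence the supremum defining
   the entropy for q1 ranges over a subset of the one for q0. *)

Definition fiber_interior (X Y : Type) (q : X -> Y) (A : set X) : set Y :=
  [set y | forall x, q x = y -> A x].

Lemma fiber_interiorE (X Y : Type) (q : X -> Y) (A : set X) :
  fiber_interior q A = ~` (q @` ~` A).
Proof.
apply/seteqP; split=> y /=.
- by move=> Ay [x nAx qxy]; exact: nAx (Ay x qxy).
- by move=> nqA x qxy; apply: contrapT => nAx; apply: nqA; exists x.
Qed.

Lemma open_fiber_interior (X Y : topologicalType) (q : X -> Y) (A : set X) :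
  compact [set: X] -> hausdorff_space Y -> continuous q -> open A ->
  open (fiber_interior q A).
Proof.
move=> cX hY cq oA; rewrite fiber_interiorE; apply: closed_openC.
apply: compact_closed => //; apply: continuous_compact.
  exact: continuous_subspaceT.
by rewrite -[~` A]setTI; apply: compact_closedI => //; exact: open_closedC.
Qed.

Lemma preimage_fiber_interior (X Y0 Y1 : Type) (q0 : X -> Y0) (q1 : X -> Y1)
    (u : set Y1) :
  ker_refines q0 q1 -> q0 @^-1` fiber_interior q0 (q1 @^-1` u) = q1 @^-1` u.
Proof.
move=> ker; apply/seteqP; split=> x /=; first exact.
by move=> ux x' /ker qx; rewrite /= qx.
Qed.

Definition transport_cover (X Y0 Y1 : Type) (q0 : X -> Y0) (q1 : X -> Y1)
    (U : set (set Y1)) : set (set Y0) :=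
  [set fiber_interior q0 (q1 @^-1` u) | u in U].

Lemma open_cover_transport (X Y0 Y1 : topologicalType) (q0 : X -> Y0)
    (q1 : X -> Y1) (U : set (set Y1)) :
  compact [set: X] -> hausdorff_space Y0 -> quotient_map q0 -> continuous q1 ->
  ker_refines q0 q1 -> open_cover U -> open_cover (transport_cover q0 q1 U).
Proof.
move=> cX hY0 [cq0 sq0] cq1 ker [oU covU]; split.
  move=> _ [u Uu <-]; apply: open_fiber_interior => //.
  exact: open_comp (oU u Uu).
move=> y _; have [x <-] := sq0 y; have [u Uu ux] := covU (q1 x) I.
by exists (fiber_interior q0 (q1 @^-1` u)); [exists u | move=> x' /ker qx; rewrite /= qx].
Qed.

Lemma preim_fam_transport (X Y0 Y1 : Type) (q0 : X -> Y0) (q1 : X -> Y1)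
    (U : set (set Y1)) :
  ker_refines q0 q1 -> preim_fam q0 (transport_cover q0 q1 U) = preim_fam q1 U.
Proof.
move=> ker; apply/seteqP; split=> S.
- by move=> [_ [u Uu <-] <-]; exists u; rewrite ?preimage_fiber_interior.
- move=> [u Uu <-]; exists (fiber_interior q0 (q1 @^-1` u)); first by exists u.
  exact: preimage_fiber_interior.
Qed.

Theorem mainTheorem3 (R : realType) (X Y0 Y1 : topologicalType)
  (f : X -> X) (q0 : X -> Y0) (q1 : X -> Y1) :
  compact_hausdorff X -> continuous f -> (forall y, exists x, f x = y) ->
  compact_hausdorff Y0 -> compact_hausdorff Y1 ->
  quotient_map q0 -> quotient_map q1 ->
  ker_refines q0 q1 ->
  qtop_entropy R f q1 <= qtop_entropy R f q0.
Proof.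
move=> [cX _] _ _ [_ hY0] _ q0quo [cq1 _] ker.
apply: ereal_sup_le => _ [U coverU <-].
exists (transport_cover q0 q1 U); first exact: open_cover_transport.
by rewrite preim_fam_transport.
Qed.
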